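(* Run IPR with $\rho=4$ (and any $\alpha\in(0,1)$, $\epsilon\in(0,1)$). For each iteration $i$ of the while loop, let $b^{(i)}_{\min}$ be the minimum of $p(B)$ over all bags $B$ in the tentative assignment at the start of iteration $i$. Then at each iteration $i$ (such that iteration $i+1$ is executed), $b^{(i+1)}_{\min}\ge b^{(i)}_{\min}$.
   Context: Jobs $j\in[n]$ have processing times $p_j\ge0$; for a bag $B$, $p(B)=\sum_{j\in B}p_j$. There are $m$ machines with predicted speeds $\hat s_1\ge\dots\ge\hat s_m$; $opt(\mathbf p,\hat{\mathbf s})$ is the minimum makespan $\max_i(\text{load of } i)/\hat s_i$ of assigning jobs to machines with speeds $\hat{\mathbf s}$. Algorithm IPR. Input: $\hat{\mathbf s}$, $\mathbf p$, $\alpha$, accuracy $\epsilon\in(0,1)$, $\rho\ge1$. (1) Compute a partition $B_1,\dots,B_m$ with $p(B_1)\ge\dots\ge p(B_m)$ such that putting $B_i$ on machine $i$ has makespan at most $(1+\epsilon)opt(\mathbf p,\hat{\mathbf s})$ under speeds $\hat{\mathbf s}$. (2) Set $\overline{OPT}_C=\max_i p(B_i)/\hat s_i$ and tentative assignment $\mathcal M_i=\{B_i\}$. (3) While $\max\{p(B): B\in\cup_i\mathcal M_i, |B|\ge2\}>\rho\min\{p(B):B\in\cup_i\mathcal M_i\}$ (one execution of the loop body is an iteration): compute $\mathcal M'=$ LPT-Rebalance$(\mathcal M)$; if $\max_i\sum_{B\in\mathcal M'_i}p(B)/\hat s_i>(1+\alpha)\overline{OPT}_C$ return the current bags $\cup_i\mathcal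 M_i$; else $\mathcal M\leftarrow\mathcal M'$. (4) Return the bags $\cup_i\mathcal M_i$. LPT-Rebalance: let $B_{\min}$ be a bag of minimum $p(B)$ over all bags, $\mathcal M_{\min}$ its collection, $\mathcal M_{\max}$ a collection containing a bag of maximum $p(B)$ among bags with at least two jobs. Move $B_{\min}$ into $\mathcal M_{\max}$, let $\ell=|\mathcal M_{\max}|$, pool its jobs and redistribute them into $\ell$ new bags by LPT (jobs in non-increasing processing time, each into a currently least-loaded bag); these form the new $\mathcal M_{\max}$. *)

From HB Require Import structures.
From mathcomp Require Import all_boot all_order all_algebra.
Set Implicit Arguments. Unset Strict Implicit. Unset Printing Implicit Defensive.
Import Order.TTheory GRing.Theory Num.Theory.
Local Open Scope ring_scope.

Section IPR.
Variables (R : realFieldType) (n m : nat).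
Variable p : 'I_n -> R.
Variable s : 'I_m -> R.          (* predicted speeds *)

(* a bag is a list of (distinct) jobs *)
Definition pB (B : seq 'I_n) : R := \sum_(j <- B) p j.

Definition makespan_assign (f : {ffun 'I_n -> 'I_m}) : R :=
  \big[Num.max/0]_(i < m) ((\sum_(j | f j == i) p j) / s i).

Definition is_opt (v : R) : Prop :=
  (exists f, makespan_assign f = v) /\ (forall f, v <= makespan_assign f).

Definition OPTC (B : 'I_m -> seq 'I_n) : R :=
  \big[Num.max/0]_(i < m) (pB (B i) / s i).

Definition ipr_partition (eps : R) (B : 'I_m -> seq 'I_n) : Prop :=
  [/\ perm_eq (flatten [seq B i | i <- enum 'I_m]) (enum 'I_n),
      (forall i j : 'I_m, (i <= j)%N -> pB (B j) <= pB (B i)) &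
      exists opt, is_opt opt /\ OPTC B <= (1 + eps) * opt].

(* tentative assignment: a collection of bags for each machine *)
Definition state := 'I_m -> seq (seq 'I_n).

Definition allbags (M : state) : seq (seq 'I_n) := flatten [seq M i | i <- enum 'I_m].

(* b_min : minimum of p(B) over all bags (0 if there are no bags) *)
Definition minbag (M : state) : R :=
  \big[Num.min/pB (head [::] (allbags M))]_(B <- allbags M) pB B.

Definition loop_cond (rho : R) (M : state) : Prop :=
  exists2 B, B \in allbags M & (2 <= size B)%N /\ rho * minbag M < pB B.

Definition state_makespan (M : state) : R :=
  \big[Num.max/0]_(i < m) ((\sum_(B <- M i) pB B) / s i).

Inductive lpt_run : seq (seq 'I_n) -> seq 'I_n -> seq (seq 'I_n) -> Prop :=
| lpt_nil bs : lpt_run bs [::] bs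
| lpt_cons bs k j js res :
    (k < size bs)%N ->
    (forall k', (k' < size bs)%N -> pB (nth [::] bs k) <= pB (nth [::] bs k')) ->
    lpt_run (set_nth [::] bs k (rcons (nth [::] bs k) j)) js res ->
    lpt_run bs (j :: js) res.

(* LPT redistribution of [jobs] into l new bags (ties broken arbitrarily) *)
Definition lpt (l : nat) (jobs : seq 'I_n) (res : seq (seq 'I_n)) : Prop :=
  exists2 order, perm_eq order jobs &
    sorted (fun a b => p b <= p a) order /\ lpt_run (nseq l [::]) order res.

(* LPT-Rebalance (any admissible choice of B_min, M_max, LPT tie-breaking) *)
Definition rebalance (M M' : state) : Prop :=
  exists (i j : 'I_m) (Bmin Bx : seq 'I_n),
  [/\ Bmin \in M i,
      (forall B, B \in allbags M -> pB Bmin <= pB B),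
      Bx \in M j /\ (2 <= size Bx)%N,
      (forall B, B \in allbags M -> (2 <= size B)%N -> pB B <= pB Bx) &
      (let M1 := fun k => if k == i then rem Bmin (M i) else M k in
       let coll := Bmin :: M1 j in
       exists res, lpt (size coll) (flatten coll) res /\
         (forall k, M' k = if k == j then res else M1 k))].

(* M t = tentative assignment at the start of iteration t (t = 0..K);
   iterations 0..K-1 were executed and their rebalance was accepted *)
Definition ipr_trace (alpha rho : R) (B : 'I_m -> seq 'I_n) (M : nat -> state) (K : nat) : Prop :=
  (forall i, M 0%N i = [:: B i]) /\
  (forall t, (t < K)%N ->
     [/\ loop_cond rho (M t), rebalance (M t) (M t.+1) &
         state_makespan (M t.+1) <= (1 + alpha) * OPTC B]).

End IPR.

(* Along the loop, every machine keeps the property that each of its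
   multi-job bags weighs at most twice any of its bags; LPT output bags have
   it because a job is only ever added to a currently lightest bag.  When the
   loop condition holds with rho >= 4, the largest multi-job bag exceeds four
   times the minimum b, so the bags merged with B_min all weigh at least 2b.
   LPT then returns bags of weight at least b: otherwise let L < b be the
   lightest output bag and give each job the weight p(x) if p(x) <= L and 2b
   otherwise.  Input bags then have total weight at least b + 2b(l-1), while
   output bags (whose multi-job bags only contain jobs of size at most L) have
   total weight at most L + 2b(l-1). *)
From HB Require Import structures.
From mathcomp Require Import all_boot all_order all_algebra.
From mathcomp Require Import lra.
Import Order.TTheory GRing.Theory Num.Theory.
Set Implicit Arguments. Unset Strict Implicit.
Local Open Scope ring_scope.

Lemma le_sum_mem (R : numDomainType) (T : eqType) (F : T -> R) x s :
  (forall y, 0 <= F y) -> x \in s -> F x <= \sum_(y <- s) F y.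
Proof. by move=> F_ge0 x_s; rewrite (big_rem _ x_s) /= lerDl sumr_ge0. Qed.

Lemma sumr_const_seq (R : nmodType) (T : Type) (s : seq T) (c : R) :
  \sum_(x <- s) c = c *+ size s.
Proof. by rewrite big_const_seq count_predT iter_addr_0. Qed.

Lemma exists_argmin_seq (R : realDomainType) (T : eqType) (F : T -> R) s :
  s != [::] -> exists2 x, x \in s & forall y, y \in s -> F x <= F y.
Proof.
elim: s => [|a s IHs] // _; have [->|/IHs [x x_s x_min]] := eqVneq s [::].
  by exists a => [|y]; rewrite ?mem_head // inE => /eqP->.
have [Fa_le|Fx_lt] := leP (F a) (F x).
  exists a => [|y]; first by rewrite mem_head.
  by rewrite inE => /predU1P [->|/x_min/(le_trans Fa_le)].
exists x => [|y]; first by rewrite inE x_s orbT.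
by rewrite inE => /predU1P [->|/x_min//]; apply: ltW.
Qed.

Lemma mem_set_nth_lt (T : eqType) (x0 v x : T) (s : seq T) k :
  (k < size s)%N -> x \in set_nth x0 s k v -> x = v \/ x \in s.
Proof.
move=> lt_k; rewrite set_nthE lt_k mem_cat inE.
by case/or3P => [/mem_take|/eqP|/mem_drop]; auto.
Qed.

Lemma perm_flatten_set_nth_rcons (T : eqType) (s : seq (seq T)) k x :
  (k < size s)%N ->
  perm_eq (flatten (set_nth [::] s k (rcons (nth [::] s k) x)))
          (rcons (flatten s) x).
Proof.
elim: s k => [|y s IHs] [|k] //= lt_k.
  by rewrite -!cats1 -!catA perm_cat2l perm_catC.
by rewrite rcons_cat perm_cat2l IHs.
Qed.

Lemma mem_rem_at (I T : eqType) (F : I -> seq T) i x k y :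
  y \in (if k == i then rem x (F i) else F k) -> y \in F k.
Proof. by case: ifP => [/eqP-> /mem_rem|_]. Qed.

Section Bags.
Variables (R : realFieldType) (n : nat) (p : 'I_n -> R).
Hypothesis p_ge0 : forall j, 0 <= p j.

Lemma pB_ge0 X : 0 <= pB p X.
Proof. exact: sumr_ge0. Qed.

Lemma pB_rcons X x : pB p (rcons X x) = pB p X + p x.
Proof. by rewrite /pB big_rcons. Qed.

Lemma le_pB_mem x X : x \in X -> p x <= pB p X.
Proof. exact: le_sum_mem. Qed.

(* Shape of LPT output: the last job [y] of a multi-job bag was added when the
   rest [pre] was a lightest bag (and bags only grow afterwards); [p y <= pB pre]
   since jobs arrive in non-increasing order. *)
Definition lpt_shaped (bs : seq (seq 'I_n)) :=
  forall X, X \in bs -> (1 < size X)%N -> exists pre y,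
    [/\ X = rcons pre y, p y <= pB p pre & forall C, C \in bs -> pB p pre <= pB p C].

Lemma lpt_shaped_le_double bs X C : lpt_shaped bs -> X \in bs -> C \in bs ->
  (1 < size X)%N -> pB p X <= 2 * pB p C.
Proof.
move=> shaped X_bs C_bs X_gt1; have [pre [y [-> y_le pre_le]]] := shaped X X_bs X_gt1.
by rewrite pB_rcons; have := pre_le C C_bs; lra.
Qed.

Lemma lpt_shaped_job_le bs X C x : lpt_shaped bs -> X \in bs -> C \in bs ->
  (1 < size X)%N -> x \in X -> p x <= pB p C.
Proof.
move=> shaped X_bs C_bs X_gt1; have [pre [y [-> y_le pre_le]]] := shaped X X_bs X_gt1.
have pre_C := pre_le C C_bs.
by rewrite mem_rcons inE => /predU1P [->|/le_pB_mem x_pre]; apply: le_trans pre_C.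
Qed.

Lemma lpt_shaped_add bs k j :
  lpt_shaped bs -> (k < size bs)%N ->
  (forall C, C \in bs -> pB p (nth [::] bs k) <= pB p C) ->
  (forall x, x \in flatten bs -> p j <= p x) ->
  lpt_shaped (set_nth [::] bs k (rcons (nth [::] bs k) j)).
Proof.
set bk := nth [::] bs k => shaped lt_k bk_min j_le.
have bk_bs : bk \in bs by exact: mem_nth.
have bk_le C : C \in set_nth [::] bs k (rcons bk j) -> pB p bk <= pB p C.
  by case/(mem_set_nth_lt lt_k) => [->|/bk_min //]; rewrite pB_rcons lerDl.
move=> X /(mem_set_nth_lt lt_k) [-> | X_bs X_gt1].
  rewrite size_rcons ltnS => /(mem_nth j) x_bk.
  exists bk, j; split=> //; apply: le_trans (le_pB_mem x_bk).
  by apply: j_le; apply/flattenP; exists bk.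
have [pre [y [X_eq y_le pre_le]]] := shaped X X_bs X_gt1.
exists pre, y; split=> // C /[dup] /bk_le bk_C _.
exact: le_trans (pre_le _ bk_bs) bk_C.
Qed.

Lemma lpt_run_size bs js res : lpt_run p bs js res -> size res = size bs.
Proof.
elim=> {bs js res} // bs k j js res lt_k _ _ ->.
by rewrite size_set_nth; apply/maxn_idPr.
Qed.

Lemma lpt_run_perm bs js res :
  lpt_run p bs js res -> perm_eq (flatten res) (flatten bs ++ js).
Proof.
elim=> {bs js res} [bs|bs k j js res lt_k _ _ IH]; first by rewrite cats0.
apply: perm_trans IH _; rewrite -cat_rcons perm_cat2r.
exact: perm_flatten_set_nth_rcons.
Qed.

Lemma lpt_run_shaped bs js res : lpt_run p bs js res ->
  sorted (fun a b => p b <= p a) js ->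
  (forall x y, x \in flatten bs -> y \in js -> p y <= p x) ->
  lpt_shaped bs -> lpt_shaped res.
Proof.
elim=> {bs js res} // bs k j js res lt_k bk_min _ IH sorted_js placed_ge shaped.
have js_le y : y \in js -> p y <= p j.
  have ge_trans : transitive (fun a b : 'I_n => p b <= p a).
    by move=> a b c ba cb; apply: le_trans cb ba.
  by move/(allP (order_path_min ge_trans sorted_js)).
apply: IH; first exact: path_sorted sorted_js.
- move=> x y; rewrite (perm_mem (perm_flatten_set_nth_rcons j lt_k)) mem_rcons.
  rewrite inE => /predU1P [->|x_bs] y_js; first exact: js_le.
  by apply: placed_ge; rewrite // inE y_js orbT.
- apply: lpt_shaped_add => // [C C_bs|x x_bs].
    by rewrite -(nth_index [::] C_bs); apply: bk_min; rewrite index_mem.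
  by apply: placed_ge; rewrite ?mem_head.
Qed.

Lemma lpt_result l jobs res : lpt p l jobs res ->
  [/\ lpt_shaped res, size res = l & perm_eq (flatten res) jobs].
Proof.
case=> order perm_order [sorted_order run].
have flatten_empty : flatten (nseq l ([::] : seq 'I_n)) = [::] by elim: l {run}.
split.
- apply: lpt_run_shaped run sorted_order _ _ => [x y|X]; first by rewrite flatten_empty.
  by rewrite mem_nseq => /andP [_ /eqP->].
- by rewrite (lpt_run_size run) size_nseq.
- by apply: perm_trans perm_order; rewrite -[order]cat0s -flatten_empty lpt_run_perm.
Qed.

Section CappedWeight.
Variables (L c : R).

Definition capped x := if p x <= L then p x else c.
Definition capW (X : seq 'I_n) := \sum_(x <- X) capped x.

Lemma capW_small X : (forall x, x \in X -> p x <= L) -> capW X = pB p X.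
Proof. by move=> small; apply: eq_big_seq => x /small; rewrite /capped => ->. Qed.

Lemma capW_ge_min X : 0 <= c -> Num.min (pB p X) c <= capW X.
Proof.
move=> c_ge0; have [/hasP [x x_X L_lt]|/hasPn small] := boolP (has (fun x => L < p x) X).
  rewrite ge_min; apply/orP; right.
  have -> : c = capped x by rewrite /capped leNgt L_lt.
  by apply: (le_sum_mem _ x_X) => y; rewrite /capped; case: ifP.
by rewrite capW_small ?ge_min ?lexx // => x /small; rewrite -leNgt.
Qed.

Lemma capW_lpt_shaped_le bs S X : lpt_shaped bs -> S \in bs -> X \in bs ->
  L = pB p S -> 2 * L <= c -> capW X <= c.
Proof.
move=> shaped S_bs X_bs L_S Lc; have L_ge0 : 0 <= L by rewrite L_S pB_ge0.
have [X_gt1|] := ltnP 1 (size X).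
  rewrite capW_small => [|x].
    by apply: le_trans Lc; rewrite L_S (lpt_shaped_le_double shaped).
  by rewrite L_S; apply: lpt_shaped_job_le shaped X_bs S_bs X_gt1.
case: X X_bs => [|x [|? ?]] // _ _; rewrite /capW ?big_nil ?big_seq1; first lra.
by rewrite /capped; case: ifP => // x_le; lra.
Qed.

End CappedWeight.

Lemma lpt_bags_ge B0 rest res b :
  lpt p (size (B0 :: rest)) (flatten (B0 :: rest)) res ->
  b <= pB p B0 -> (forall C, C \in rest -> 2 * b <= pB p C) ->
  forall X, X \in res -> b <= pB p X.
Proof.
move=> run B0_ge rest_ge.
have [b_le0|b_gt0] := leP b 0; first by move=> X _; apply: le_trans b_le0 (pB_ge0 X).
have [shaped size_res perm_res] := lpt_result run.
have [S S_res S_min] : exists2 S, S \in res & forall X, X \in res -> pB p S <= pB p X.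
  by apply: exists_argmin_seq; rewrite -size_eq0 size_res.
suff b_le_S : b <= pB p S by move=> X /S_min; apply: le_trans.
set L := pB p S; have [//|L_lt_b] := leP b L.
pose w := capW L (2 * b).
have w_ge X : Num.min (pB p X) (2 * b) <= w X by apply: capW_ge_min; lra.
have in_ge : b + (2 * b) *+ size rest <= \sum_(X <- B0 :: rest) w X.
  rewrite big_cons -sumr_const_seq; apply: lerD.
    by apply: le_trans (w_ge B0); rewrite le_min B0_ge /=; lra.
  rewrite big_seq [leRHS]big_seq; apply: ler_sum => C /rest_ge C_ge.
  by apply: le_trans (w_ge C); rewrite le_min C_ge lexx.
have out_le : \sum_(X <- res) w X <= L + (2 * b) *+ size rest.
  have -> : size rest = size (rem S res) by rewrite size_rem // size_res.
  rewrite (big_rem _ S_res) /= -sumr_const_seq; apply: lerD.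
    by rewrite /w capW_small // => x /le_pB_mem.
  rewrite big_seq [leRHS]big_seq; apply: ler_sum => X /mem_rem X_res.
  by apply: (capW_lpt_shaped_le shaped S_res X_res) => //; lra.
have same_total : \sum_(X <- B0 :: rest) w X = \sum_(X <- res) w X.
  by rewrite /w /capW -!big_flatten (perm_big _ perm_res).
move: in_ge out_le; rewrite same_total; lra.
Qed.

End Bags.

Section Assignment.
Variables (R : realFieldType) (n m : nat) (p : 'I_n -> R).
Hypothesis p_ge0 : forall j, 0 <= p j.

Lemma allbagsP (M : state n m) B : reflect (exists k, B \in M k) (B \in allbags M).
Proof.
apply: (iffP flattenP) => [[s /mapP [k _ ->]]|[k B_k]]; first by exists k.
by exists (M k) => //; apply: map_f; rewrite mem_enum.
Qed.

Lemma minbag_le (M : state n m) B : B \in allbags M -> minbag p M <= pB p B.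
Proof. by move=> B_M; apply: ge_bigmin_seq. Qed.

Lemma minbag_ge (M : state n m) B0 b : B0 \in allbags M ->
  (forall B, B \in allbags M -> b <= pB p B) -> b <= minbag p M.
Proof.
rewrite /minbag; case: (allbags M) => [//|B1 bs _ b_le].
by rewrite big_seq; apply: le_bigmin => [|B]; apply: b_le; rewrite ?mem_head.
Qed.

Definition locally_balanced (M : state n m) := forall k X C,
  X \in M k -> C \in M k -> (1 < size X)%N -> pB p X <= 2 * pB p C.

Lemma rebalance_balanced (M M' : state n m) :
  locally_balanced M -> rebalance p M M' -> locally_balanced M'.
Proof.
move=> bal [i [j [Bmin [Bx [_ _ _ _ [res [/(lpt_result p_ge0) [shaped _ _] M'_eq]]]]]]].
move=> k X C; rewrite !M'_eq; case: ifP => _; first exact: lpt_shaped_le_double.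
by move=> /mem_rem_at X_k /mem_rem_at C_k; apply: bal X_k C_k.
Qed.

Lemma rebalance_minbag_mono (rho : R) (M M' : state n m) : 4 <= rho ->
  locally_balanced M -> loop_cond p rho M -> rebalance p M M' ->
  minbag p M <= minbag p M'.
Proof.
move=> rho_ge4 bal [B' B'_M [B'_gt1 B'_big]].
move=> [i [j [Bmin [Bx [Bmin_i Bmin_min [Bx_j Bx_gt1] Bx_max [res [run M'_eq]]]]]]].
have Bmin_M : Bmin \in allbags M by apply/allbagsP; exists i.
have minbag_eq : minbag p M = pB p Bmin.
  by apply/le_anti; rewrite minbag_le //= (minbag_ge Bmin_M Bmin_min).
set b := pB p Bmin in minbag_eq *; rewrite minbag_eq in B'_big.
have Bx_big : 4 * b < pB p Bx.
  have : 0 <= (rho - 4) * b by rewrite mulr_ge0 ?subr_ge0 ?pB_ge0.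
  by have := Bx_max B' B'_M B'_gt1; rewrite -/b; lra.
have res_ge : forall X, X \in res -> b <= pB p X.
  apply: (lpt_bags_ge p_ge0 run (lexx _)) => C /mem_rem_at C_j.
  by have := bal j Bx C Bx_j C_j Bx_gt1; rewrite -/b; lra.
have [_ size_res _] := lpt_result p_ge0 run.
have res0 : nth [::] res 0 \in allbags M'.
  by apply/allbagsP; exists j; rewrite M'_eq eqxx mem_nth // size_res.
rewrite minbag_eq; apply: (minbag_ge res0) => X /allbagsP [k].
rewrite M'_eq; case: ifP => _; first exact: res_ge.
by move=> /mem_rem_at X_k; apply: Bmin_min; apply/allbagsP; exists k.
Qed.

Lemma ipr_trace_balanced (s : 'I_m -> R) alpha rho B M K :
  ipr_trace p s alpha rho B M K -> forall t, (t <= K)%N -> locally_balanced (M t).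
Proof.
move=> [M0 step]; elim=> [_ k X C|t IHt lt_tK].
  by rewrite M0 !inE => /eqP-> /eqP-> _; have := pB_ge0 p_ge0 (B k); lra.
have [_ reb _] := step t lt_tK.
exact: rebalance_balanced (IHt (ltnW lt_tK)) reb.
Qed.

End Assignment.

Theorem lemma3 (R : realFieldType) (n m : nat) (p : 'I_n -> R) (s : 'I_m -> R)
  (alpha eps : R) (B : 'I_m -> seq 'I_n) (M : nat -> 'I_m -> seq (seq 'I_n)) (K : nat) :
  (forall j, 0 <= p j) ->
  (forall i, 0 < s i) ->
  (forall i j : 'I_m, (i <= j)%N -> s j <= s i) ->
  0 < alpha < 1 -> 0 < eps < 1 ->
  ipr_partition p s eps B ->
  ipr_trace p s alpha 4 B M K ->
  forall t, (t < K)%N -> loop_cond p 4 (M t.+1) ->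
    minbag p (M t) <= minbag p (M t.+1).
Proof.
move=> p_ge0 _ _ _ _ _ trace t lt_tK _.
have [loop reb _] := trace.2 t lt_tK.
have bal := ipr_trace_balanced p_ge0 trace (ltnW lt_tK).
exact: (rebalance_minbag_mono p_ge0 (lexx 4) bal loop reb).
Qed.
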